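(* Let $d>K\ge1$, $\mathbf Q\in\mathrm{St}(d,K)$, $\lambda_1>\dots>\lambda_K>0$, $\boldsymbol\Theta=\mathrm{diag}(\sqrt{\lambda_1},\dots,\sqrt{\lambda_K})$, $a_1>\dots>a_K>0$, and let $g$, $d_F$, $\mathcal A_\alpha$, $\rho_\alpha$ be as in the context. Then there exists $\delta\in(0,\tfrac{\sqrt2}{2})$ with $\lambda_Ka_K-\lambda_1a_1\delta>0$ such that for every $\alpha$ with $0\le\alpha<\lambda_Ka_K-\lambda_1a_1\delta$ there exists $\eta_1>0$ such that $$d_F(\mathbf X,\mathbf Q)\le\eta_1\,\rho_\alpha(\mathbf X)\quad\text{for all }\mathbf X\in\mathrm{St}(d,K)\text{ with }d_F(\mathbf X,\mathbf Q)\le\delta.$$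
   Context: $\mathrm{St}(d,K)=\{\mathbf X\in\mathbb R^{d\times K}:\mathbf X^\top\mathbf X=\mathbf I_K\}$. $g(\mathbf X)=\mathrm{tr}(\mathbf X^\top\mathbf Q\boldsymbol\Theta^2\mathbf Q^\top\mathbf X\,\mathrm{diag}(a_1,\dots,a_K))$, to be maximized over $\mathrm{St}(d,K)$. $d_F(\mathbf X,\mathbf Q)=\min_{\mathbf q\in\{1,-1\}^K}\|\mathbf X-\mathbf Q\,\mathrm{diag}(\mathbf q)\|_F$. For $\alpha\ge0$, $\mathcal A_\alpha(\mathbf X)=\alpha\mathbf X+\mathbf Q\boldsymbol\Theta^2\mathbf Q^\top\mathbf X\,\mathrm{diag}(a_1,\dots,a_K)$. If $\mathcal A_\alpha(\mathbf X)=\mathbf U\boldsymbol\Sigma\mathbf V^\top$ is a thin SVD, the residual is $\rho_\alpha(\mathbf X)=\|\mathbf X\mathbf V\boldsymbol\Sigma\mathbf V^\top-\mathcal A_\alpha(\mathbf X)\|_F$ (note $\mathbf V\boldsymbol\Sigma\mathbf V^\top=(\mathcal A_\alpha(\mathbf X)^\top\mathcal A_\alpha(\mathbf X))^{1/2}$, so this does not depend on the SVD chosen). *)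

From HB Require Import structures.
From mathcomp Require Import all_boot all_order all_algebra.
From mathcomp Require Import reals.
Set Implicit Arguments. Unset Strict Implicit. Unset Printing Implicit Defensive.
Import Order.TTheory GRing.Theory Num.Theory.
Local Open Scope ring_scope.

Section Defs.
Variable R : realType.

Definition frob (m n : nat) (A : 'M[R]_(m, n)) : R :=
  Num.sqrt (\sum_(i < m) \sum_(j < n) A i j ^+ 2).

Definition stiefel (d K : nat) (X : 'M[R]_(d, K)) : Prop := X^T *m X = 1%:M.

(* diag(q) for a sign vector q in {1,-1}^K, encoded by a boolean function *)
Definition sign_diag (K : nat) (q : {ffun 'I_K -> bool}) : 'M[R]_K :=
  diag_mx (\row_i (if q i then 1 else -1)).

Definition dF (d K : nat) (X Q : 'M[R]_(d, K)) : R :=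
  \big[Order.min/frob (X - Q *m sign_diag [ffun=> true])]_(q : {ffun 'I_K -> bool})
     frob (X - Q *m sign_diag q).

Definition Theta (K : nat) (lam : 'I_K -> R) : 'M[R]_K :=
  diag_mx (\row_i Num.sqrt (lam i)).

Definition Aalpha (d K : nat) (Q : 'M[R]_(d, K)) (lam a : 'I_K -> R) (alpha : R)
    (X : 'M[R]_(d, K)) : 'M[R]_(d, K) :=
  alpha *: X + Q *m (Theta lam *m Theta lam) *m Q^T *m X *m diag_mx (\row_i a i).

Definition thin_svd (d K : nat) (A U : 'M[R]_(d, K)) (s : 'rV[R]_K) (V : 'M[R]_K) : Prop :=
  U^T *m U = 1%:M /\ V^T *m V = 1%:M /\ (forall i, 0 <= s 0 i) /\
  A = U *m diag_mx s *m V^T.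

(* The residual rho_alpha(X) computed from a given thin SVD (U, s, V) of A_alpha(X):
   || X V Sigma V^T - A_alpha(X) ||_F  (independent of the chosen SVD). *)
Definition residual (d K : nat) (X A : 'M[R]_(d, K)) (s : 'rV[R]_K) (V : 'M[R]_K) : R :=
  frob (X *m V *m diag_mx s *m V^T - A).

End Defs.

From HB Require Import structures.
From mathcomp Require Import all_boot all_order all_algebra.
From mathcomp Require Import reals.
From mathcomp Require Import ring lra.
Import Order.TTheory GRing.Theory Num.Theory.
Local Open Scope ring_scope.
Set Implicit Arguments. Unset Strict Implicit.

(* Write X = Q D + Y, with D the sign matrix attaining d_F(X, Q), and split Y = Q E + W with
   Q^T W = 0.  Let B = Q Lam Q^T X N (Lam = Theta^2, N = diag a) be half the Euclidean gradient
   of g.  For every symmetric P the residual R = X P - A_alpha(X) satisfies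
   X^T R = P - alpha I - X^T B, so both the normal part (I - X X^T) B and the skew part of
   X^T B are O(|R|).  Now
   - the normal part is -W S N with S = (D + E)^T Lam (D + E) = Lam + O(|Y|); as the lam_i a_i
     are bounded below, W = O(|R| + |Y|^2);
   - the skew part is the commutator [S - Lam, N]; as the a_i are distinct, the off-diagonal
     entries of S - Lam are O(|R|);
   - D [Lam, E] = S - Lam + O(|Y|^2); as the lam_i are distinct, the off-diagonal entries of
     E are O(|R| + |Y|^2), and the Stiefel constraint D E + E^T D = - Y^T Y bounds its diagonal.
   Hence |Y| <= C (|R| + |Y|^2), and the quadratic term is absorbed once |Y| <= delta is small. *)

Section EntrywiseBounds.
Variable R : realType.

Definition mx_bound m n (A : 'M[R]_(m, n)) (c : R) := forall i j, `|A i j| <= c.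

Lemma mx_bound_le m n (A : 'M[R]_(m, n)) c c' : c <= c' -> mx_bound A c -> mx_bound A c'.
Proof. by move=> le_cc' hA i j; apply: le_trans (hA i j) le_cc'. Qed.

Lemma mx_boundD m n (A B : 'M[R]_(m, n)) cA cB :
  mx_bound A cA -> mx_bound B cB -> mx_bound (A + B) (cA + cB).
Proof. by move=> hA hB i j; rewrite mxE (le_trans (ler_normD _ _)) ?lerD. Qed.

Lemma mx_boundN m n (A : 'M[R]_(m, n)) c : mx_bound A c -> mx_bound (- A) c.
Proof. by move=> hA i j; rewrite mxE normrN. Qed.

Lemma mx_boundB m n (A B : 'M[R]_(m, n)) cA cB :
  mx_bound A cA -> mx_bound B cB -> mx_bound (A - B) (cA + cB).
Proof. by move=> hA /mx_boundN; apply: mx_boundD. Qed.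

Lemma mx_bound_tr m n (A : 'M[R]_(m, n)) c : mx_bound A c -> mx_bound A^T c.
Proof. by move=> hA i j; rewrite mxE. Qed.

Lemma mx_boundM m n p (A : 'M[R]_(m, n)) (B : 'M[R]_(n, p)) cA cB c :
  n%:R <= c -> 0 <= cA -> 0 <= cB ->
  mx_bound A cA -> mx_bound B cB -> mx_bound (A *m B) (c * cA * cB).
Proof.
move=> le_nc cA_ge0 cB_ge0 hA hB i j; rewrite mxE.
apply: le_trans (ler_norm_sum _ _ _) _.
apply: le_trans (_ : \sum_(k < n) cA * cB <= _).
  by apply: ler_sum => k _; rewrite normrM ler_pM.
by rewrite sumr_const card_ord -mulr_natl -mulrA ler_wpM2r ?mulr_ge0.
Qed.

Lemma sqr_frob m n (A : 'M[R]_(m, n)) :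
  frob A ^+ 2 = \sum_(i < m) \sum_(j < n) A i j ^+ 2.
Proof. by rewrite sqr_sqrtr // sumr_ge0 // => i _; rewrite sumr_ge0 // => j _; rewrite sqr_ge0. Qed.

Lemma frob_ge0 m n (A : 'M[R]_(m, n)) : 0 <= frob A.
Proof. exact: sqrtr_ge0. Qed.

Lemma mx_bound_frob m n (A : 'M[R]_(m, n)) : mx_bound A (frob A).
Proof.
move=> i j; rewrite -(@ler_pXn2r _ 2) ?nnegrE ?frob_ge0 // sqr_frob real_normK ?num_real //.
have sqr_entry_ge0 k l : 0 <= A k l ^+ 2 := sqr_ge0 _.
rewrite (bigD1 i) //= (bigD1 j) //= -addrA lerDl addr_ge0 ?sumr_ge0 // => k _.
exact: sumr_ge0.
Qed.

Lemma sqr_frob_le_bound m n (A : 'M[R]_(m, n)) c :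
  mx_bound A c -> frob A ^+ 2 <= (m * n)%:R * c * frob A.
Proof.
move=> hA; rewrite sqr_frob.
apply: le_trans (_ : \sum_(i < m) \sum_(j < n) c * frob A <= _).
  apply: ler_sum => i _; apply: ler_sum => j _.
  by rewrite -(real_normK (num_real _)) expr2 ler_pM ?mx_bound_frob.
by rewrite !sumr_const !card_ord -mulrnA mulnC -mulrA mulr_natl.
Qed.

Lemma mx_bound_stiefel m n (X : 'M[R]_(m, n)) : X^T *m X = 1%:M -> mx_bound X 1.
Proof.
move=> hX i j; rewrite -(@ler_pXn2r _ 2) ?nnegrE // expr1n real_normK ?num_real //.
have /matrixP/(_ j j) := hX; rewrite !mxE eqxx mulr1n => <-.
rewrite (bigD1 i) //= mxE -expr2 lerDl sumr_ge0 // => k _.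
by rewrite mxE -expr2 sqr_ge0.
Qed.

Lemma mx_bound_stiefel_mul m n p (X : 'M[R]_(m, n)) (B : 'M[R]_(n, p)) c cB :
  X^T *m X = 1%:M -> n%:R <= c -> 0 <= cB -> mx_bound B cB -> mx_bound (X *m B) (c * cB).
Proof.
move=> hX le_nc cB_ge0 hB; rewrite -[c]mulr1.
exact: mx_boundM le_nc ler01 cB_ge0 (mx_bound_stiefel hX) hB.
Qed.

Lemma mx_bound_stiefel_trmul m n p (X : 'M[R]_(m, n)) (B : 'M[R]_(m, p)) c cB :
  X^T *m X = 1%:M -> m%:R <= c -> 0 <= cB -> mx_bound B cB -> mx_bound (X^T *m B) (c * cB).
Proof.
move=> hX le_mc cB_ge0 hB; rewrite -[c]mulr1.
exact: mx_boundM le_mc ler01 cB_ge0 (mx_bound_tr (mx_bound_stiefel hX)) hB.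
Qed.

Lemma mx_bound_mul_diag m n (A : 'M[R]_(m, n)) (v : 'rV[R]_n) c c' :
  mx_bound A c -> (forall j, `|v 0 j| <= c') -> mx_bound (A *m diag_mx v) (c * c').
Proof. by move=> hA hv i j; rewrite mul_mx_diag mxE normrM ler_pM. Qed.

Lemma mx_bound_diag_mul m n (v : 'rV[R]_m) (A : 'M[R]_(m, n)) c c' :
  (forall i, `|v 0 i| <= c') -> mx_bound A c -> mx_bound (diag_mx v *m A) (c' * c).
Proof. by move=> hv hA i j; rewrite mul_diag_mx mxE normrM ler_pM. Qed.

Lemma ler_normDB_entry m n (A B C : 'M[R]_(m, n)) i j :
  `|(A + B - C) i j| <= `|A i j| + `|B i j| + `|C i j|.
Proof. by rewrite !mxE (le_trans (ler_normB _ _)) // lerD // ler_normD. Qed.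

End EntrywiseBounds.

Lemma dF_attained (R : realType) d K (X Q : 'M[R]_(d, K)) :
  exists q, dF X Q = frob (X - Q *m sign_diag R q).
Proof.
rewrite /dF; elim/big_ind: _ => [|x y [qx ->] [qy ->]|q _]; first by exists [ffun=> true].
- by rewrite minEle; case: ifP; [exists qx | exists qy].
- by exists q.
Qed.

Section DiagEntries.
Variables (R : comPzRingType) (n : nat) (v : 'I_n -> R).
Local Notation Dv := (diag_mx (\row_k v k)).

Lemma mul_mx_diag_rowE m (A : 'M[R]_(m, n)) i j : (A *m Dv) i j = A i j * v j.
Proof. by rewrite mul_mx_diag !mxE. Qed.

Lemma diag_commutatorE (A : 'M[R]_n) i j : (Dv *m A - A *m Dv) i j = (v i - v j) * A i j.
Proof. by rewrite mul_diag_mx mul_mx_diag !mxE mulrBl [A i j * _]mulrC. Qed.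

End DiagEntries.

Section SignDiag.
Variables (R : realType) (K : nat) (q : {ffun 'I_K -> bool}).
Local Notation D := (sign_diag R q).
Local Notation sgn i := (if q i then 1 else -1 : R).

Lemma normr_sign i : `|sgn i| = 1.
Proof. by case: (q i); rewrite ?normrN normr1. Qed.

Lemma sign_sqr i : sgn i * sgn i = 1.
Proof. by case: (q i); rewrite ?mulrNN mulr1. Qed.

Lemma tr_sign_diag : D^T = D.
Proof. exact: tr_diag_mx. Qed.

Lemma sign_diag_sqr : D *m D = 1%:M.
Proof.
rewrite mulmx_diag -diag_const_mx; congr diag_mx.
by apply/rowP => j; rewrite !mxE sign_sqr.
Qed.

Lemma sign_diag_conj (v : 'rV[R]_K) : D *m diag_mx v *m D = diag_mx v.
Proof. by rewrite diag_mxC -mulmxA sign_diag_sqr mulmx1. Qed.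

Lemma mx_bound_mul_sign_diag m (A : 'M[R]_(m, K)) c : mx_bound A c -> mx_bound (A *m D) c.
Proof. by move=> hA i j; rewrite mul_mx_diag !mxE normrM normr_sign mulr1. Qed.

Lemma mx_bound_sign_diag_mul n (A : 'M[R]_(K, n)) c : mx_bound A c -> mx_bound (D *m A) c.
Proof. by move=> hA i j; rewrite mul_diag_mx !mxE normrM normr_sign mul1r. Qed.

Lemma sign_diag_mulE n (A : 'M[R]_(K, n)) i j : (D *m A) i j = sgn i * A i j.
Proof. by rewrite mul_diag_mx !mxE. Qed.

Lemma sign_diag_symE (A : 'M[R]_K) i : (D *m A + A^T *m D) i i = 2 * (sgn i * A i i).
Proof. by rewrite mul_diag_mx mul_mx_diag !mxE [A i i * _]mulrC mulr2n mulrDl !mul1r. Qed.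

End SignDiag.

(* One constant dominating all the data of the problem, so that every bound below is a power
   of [M] times a norm. *)
Record spectral_gauge (R : realType) (d K : nat) (lam a : 'I_K -> R) (M : R) : Prop :=
  SpectralGauge {
    gauge_ge1 : 1 <= M;
    gauge_dim : d%:R <= M;
    gauge_lam_ge0 : forall i, 0 <= lam i;
    gauge_lam_le : forall i, lam i <= M;
    gauge_a_ge0 : forall i, 0 <= a i;
    gauge_a_le : forall i, a i <= M;
    gauge_lam_sep : forall i j, i != j -> 1 <= M * `|lam i - lam j|;
    gauge_a_sep : forall i j, i != j -> 1 <= M * `|a i - a j|;
    gauge_lama : forall i, 1 <= M * (lam i * a i) }.

Section LocalErrorBound.
Variables (R : realType) (d K : nat) (Q : 'M[R]_(d, K)) (lam a : 'I_K -> R).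
Hypothesis hQ : Q^T *m Q = 1%:M.
Variables (X : 'M[R]_(d, K)) (q : {ffun 'I_K -> bool}).
Hypothesis hX : X^T *m X = 1%:M.

Let L := diag_mx (\row_i lam i).
Let N := diag_mx (\row_i a i).
Let D := sign_diag R q.
Let B := Q *m L *m Q^T *m X *m N.
Let G := (1%:M - X *m X^T) *m B.
Let T := X^T *m B - (X^T *m B)^T.
Let Y := X - Q *m D.
Let E := Q^T *m Y.
Let W := Y - Q *m E.
Let S := (D + E)^T *m L *m (D + E).

Lemma QtX_decomp : Q^T *m X = D + E.
Proof. by rewrite /E /Y mulmxBr mulmxA hQ mul1mx addrC subrK. Qed.

Lemma Y_decomp : Y = Q *m E + W.
Proof. by rewrite /W addrC subrK. Qed.

Lemma X_decomp : X = Q *m (D + E) + W.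
Proof. by rewrite mulmxDr -addrA -Y_decomp /Y addrC subrK. Qed.

Lemma stiefel_defect : D *m E + E^T *m D = - (Y^T *m Y).
Proof.
have hXY : X = Y + Q *m D by rewrite /Y subrK.
have expand : X^T *m X = Y^T *m Y + (D *m E + E^T *m D) + D *m D.
  rewrite hXY [(Y + _)^T]linearD /= trmx_mul /D tr_sign_diag -/D.
  rewrite mulmxDl (mulmxDr Y^T Y) (mulmxDr (D *m Q^T) Y) -(mulmxA D Q^T Y) -/E.
  rewrite (mulmxA (D *m Q^T)) -(mulmxA D Q^T Q) hQ mulmx1 mulmxA.
  have trE : E^T = Y^T *m Q by rewrite trmx_mul trmxK.
  by rewrite -trE (addrC (D *m E) (E^T *m D)) !addrA.
move: expand; rewrite hX /D sign_diag_sqr -/D => expand.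
have : Y^T *m Y + (D *m E + E^T *m D) = 0 by apply: (addIr 1%:M); rewrite add0r -expand.
by rewrite addrC => /eqP; rewrite addr_eq0 => /eqP.
Qed.

Lemma S_sub_L : S - L = E^T *m L *m D + D *m (L *m E) + E^T *m L *m E.
Proof.
have trDE : (D + E)^T = D + E^T by rewrite linearD /= tr_sign_diag.
rewrite /S trDE !mulmxDl !mulmxDr /D sign_diag_conj -/D -/L.
by rewrite addrAC [L + _]addrC addrK -(mulmxA D L E) addrA (addrC (D *m (L *m E))).
Qed.

Lemma skew_egrad : T = (S - L) *m N - N *m (S - L).
Proof.
have trN : N^T = N by exact: tr_diag_mx.
have trS : S^T = S by rewrite /S !trmx_mul trmxK tr_diag_mx mulmxA.
have XtB : X^T *m B = S *m N by rewrite /B /S -QtX_decomp trmx_mul trmxK !mulmxA.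
have LN : L *m N = N *m L by exact: diag_mxC.
rewrite /T XtB trmx_mul trN trS (mulmxBl S L N) (mulmxBr N S L) LN.
by rewrite opprB subrKA.
Qed.

Lemma commutator_LE : D *m (L *m E - E *m L) = S - L + Y^T *m Y *m L - E^T *m L *m E.
Proof.
have LD : L *m D = D *m L by exact: diag_mxC.
have EtD : E^T *m D = - (Y^T *m Y) - D *m E by rewrite -stiefel_defect addrC addKr.
rewrite S_sub_L -(mulmxA E^T L D) LD (mulmxA E^T D L) EtD.
rewrite (mulmxBr D (L *m E)) (mulmxBl (- (Y^T *m Y)) (D *m E) L) mulNmx (mulmxA D E L).
by apply/matrixP => i j; rewrite !mxE; lra.
Qed.

Lemma normal_egrad : G - Q *m (Q^T *m G) = - (W *m S *m N).
Proof.
have QB : B = Q *m (L *m (D + E) *m N) by rewrite /B -QtX_decomp !mulmxA.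
have XtQ : X^T *m Q = (D + E)^T by rewrite -QtX_decomp trmx_mul trmxK.
have hG : G = Q *m (L *m (D + E) *m N) - X *m (S *m N).
  by rewrite /G QB mulmxBl mul1mx -!mulmxA (mulmxA X^T) XtQ /S !mulmxA.
rewrite hG mulmxBr (mulmxA Q^T Q) hQ mul1mx (mulmxA Q^T X) QtX_decomp X_decomp.
rewrite mulmxBr mulmxDl (mulmxA Q (D + E)) -(mulmxA W S N).
by apply/matrixP => i j; rewrite !mxE; lra.
Qed.

Variable M : R.
Hypotheses (hM : spectral_gauge d lam a M) (K_le_d : (K <= d)%N).
Variable g : R.
Hypotheses (g_ge0 : 0 <= g) (G_bound : mx_bound G g) (T_bound : mx_bound T g).
Let y := frob Y.
Hypothesis y_le1 : y <= 1.

Let M_ge1 := gauge_ge1 hM.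
Let d_leM := gauge_dim hM.
Let lam_ge0 := gauge_lam_ge0 hM.
Let a_ge0 := gauge_a_ge0 hM.
Let y_ge0 : 0 <= y. Proof. exact: frob_ge0. Qed.
Let M_ge0 : 0 <= M. Proof. exact: le_trans ler01 M_ge1. Qed.
Let K_leM : K%:R <= M. Proof. by apply: le_trans d_leM; rewrite ler_nat. Qed.
Let powM_le m n : (m <= n)%N -> M ^+ m <= M ^+ n. Proof. exact: ler_weXn2l. Qed.
Let lam_normM j : `|(\row_i lam i) 0 j| <= M.
Proof. by rewrite mxE ger0_norm ?(gauge_lam_le hM). Qed.
Let a_normM j : `|(\row_i a i) 0 j| <= M.
Proof. by rewrite mxE ger0_norm ?(gauge_a_le hM). Qed.

Lemma E_bound_lin : mx_bound E (M * y).
Proof. exact: mx_bound_stiefel_trmul hQ d_leM y_ge0 (mx_bound_frob Y). Qed.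

Lemma W_bound_lin : mx_bound W (2 * M ^+ 2 * y).
Proof.
have QE := mx_bound_stiefel_mul hQ K_leM (mulr_ge0 M_ge0 y_ge0) E_bound_lin.
apply: mx_bound_le (mx_boundB (mx_bound_frob Y) QE).
have := powM_le (isT : (0 <= 2)%N); rewrite expr0 mulrA -expr2 => M2.
have : 0 <= (M ^+ 2 - 1) * y by rewrite mulr_ge0 // subr_ge0.
rewrite -/y; lra.
Qed.

Lemma YtY_bound : mx_bound (Y^T *m Y) (M * y * y).
Proof. exact: mx_boundM d_leM y_ge0 y_ge0 (mx_bound_tr (mx_bound_frob Y)) (mx_bound_frob Y). Qed.

Lemma ELE_bound : mx_bound (E^T *m L *m E) (M ^+ 4 * y ^+ 2).
Proof.
have EtL := mx_bound_mul_diag (mx_bound_tr E_bound_lin) lam_normM.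
apply: mx_bound_le (mx_boundM K_leM _ _ EtL E_bound_lin); rewrite ?mulr_ge0 //.
lra.
Qed.

Lemma S_sub_L_bound : mx_bound (S - L) (3 * M ^+ 4 * y).
Proof.
rewrite S_sub_L.
have ELD := mx_bound_mul_sign_diag q (mx_bound_mul_diag (mx_bound_tr E_bound_lin) lam_normM).
have DLE := mx_bound_sign_diag_mul q (mx_bound_diag_mul lam_normM E_bound_lin).
apply: mx_bound_le (mx_boundD (mx_boundD ELD DLE) ELE_bound).
have y2 : y ^+ 2 <= y by rewrite expr2 ler_piMl.
have := ler_wpM2r y_ge0 (powM_le (isT : (2 <= 4)%N)).
have := ler_wpM2l (exprn_ge0 4 M_ge0) y2.
lra.
Qed.

Lemma WLN_bound : mx_bound (W *m L *m N) (6 * M ^+ 8 * (g + y ^+ 2)).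
Proof.
have WLN : W *m L *m N = - (G - Q *m (Q^T *m G)) - W *m (S - L) *m N.
  by rewrite normal_egrad opprK (mulmxBr W S L) (mulmxBl (W *m S) (W *m L) N) subKr.
have QQG := mx_bound_stiefel_mul hQ K_leM (mulr_ge0 M_ge0 g_ge0)
  (mx_bound_stiefel_trmul hQ d_leM g_ge0 G_bound).
have WSL := mx_boundM K_leM _ _ W_bound_lin S_sub_L_bound.
have WSLN := mx_bound_mul_diag (WSL _ _) a_normM.
rewrite WLN; apply: mx_bound_le (mx_boundB (mx_boundN (mx_boundB G_bound QQG)) (WSLN _ _)).
  have := ler_wpM2r g_ge0 (powM_le (isT : (0 <= 8)%N)).
  have := ler_wpM2r g_ge0 (powM_le (isT : (2 <= 8)%N)).
  have := mulr_ge0 (exprn_ge0 8 M_ge0) g_ge0.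
  rewrite expr0; lra.
all: by rewrite !mulr_ge0.
Qed.

Lemma W_bound : mx_bound W (6 * M ^+ 9 * (g + y ^+ 2)).
Proof.
move=> i j; have := WLN_bound i j; rewrite !mul_mx_diag_rowE => /(ler_wpM2l M_ge0).
have := ler_peMr (normr_ge0 (W i j)) (gauge_lama hM j).
rewrite !normrM (ger0_norm (lam_ge0 j)) (ger0_norm (a_ge0 j)) exprS.
lra.
Qed.

Lemma S_sub_L_offdiag_bound i j : i != j -> `|(S - L) i j| <= M * g.
Proof.
move=> ij; have := mx_boundN T_bound i j.
rewrite skew_egrad opprB diag_commutatorE normrM => /(ler_wpM2l M_ge0).
have := ler_peMl (normr_ge0 ((S - L) i j)) (gauge_a_sep hM ij).
lra.
Qed.

Lemma E_diag_bound i : 2 * `|E i i| <= M * y * y.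
Proof.
have := mx_boundN YtY_bound i i.
by rewrite -stiefel_defect sign_diag_symE !normrM normr_sign mul1r ger0_norm.
Qed.

Lemma E_offdiag_bound i j : i != j ->
  `|lam i - lam j| * `|E i j| <= M * g + M * y * y * M + M ^+ 4 * y ^+ 2.
Proof.
move=> ij; have := ler_normDB_entry (S - L) (Y^T *m Y *m L) (E^T *m L *m E) i j.
rewrite -commutator_LE sign_diag_mulE diag_commutatorE !normrM normr_sign mul1r.
have := S_sub_L_offdiag_bound ij; have := mx_bound_mul_diag YtY_bound lam_normM i j.
have := ELE_bound i j; lra.
Qed.

Lemma E_bound : mx_bound E (3 * M ^+ 5 * (g + y ^+ 2)).
Proof.
have := mulr_ge0 (exprn_ge0 5 M_ge0) g_ge0.
have := mulr_ge0 (exprn_ge0 5 M_ge0) (sqr_ge0 y).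
have := ler_wpM2r (sqr_ge0 y) (powM_le (isT : (1 <= 5)%N)).
have := ler_wpM2r (sqr_ge0 y) (powM_le (isT : (3 <= 5)%N)).
have := ler_wpM2r g_ge0 (powM_le (isT : (2 <= 5)%N)).
rewrite !exprS expr0 => M25g M35y M15y M5y M5g i j.
have [<-|ij] := eqVneq i j; first by have := E_diag_bound i; lra.
have := ler_wpM2l M_ge0 (E_offdiag_bound ij).
have := ler_peMl (normr_ge0 (E i j)) (gauge_lam_sep hM ij).
lra.
Qed.

Lemma local_error_bound : mx_bound Y (9 * M ^+ 9 * (g + y ^+ 2)).
Proof.
have gy : 0 <= g + y ^+ 2 by rewrite addr_ge0 ?sqr_ge0.
have QE := mx_bound_stiefel_mul hQ K_leM (mulr_ge0 (mulr_ge0 _ (exprn_ge0 5 M_ge0)) gy) E_bound.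
rewrite Y_decomp; apply: mx_bound_le (mx_boundD (QE _) W_bound) => //.
have := ler_wpM2r gy (powM_le (isT : (6 <= 9)%N)).
rewrite !exprS; lra.
Qed.

End LocalErrorBound.

Section Residual.
Variables (R : realType) (d K : nat) (X B : 'M[R]_(d, K)) (P : 'M[R]_K) (alpha : R).
Hypotheses (hX : X^T *m X = 1%:M) (hP : P^T = P).
Let R0 := X *m P - (alpha *: X + B).

Lemma trX_residual : X^T *m R0 = P - alpha%:M - X^T *m B.
Proof.
rewrite /R0 (mulmxBr X^T) (mulmxDr X^T) mulmxA hX mul1mx -scalemxAr hX.
by rewrite scalemx1 opprD addrA.
Qed.

Lemma normal_residual : (1%:M - X *m X^T) *m B = X *m (X^T *m R0) - R0.
Proof.
rewrite trX_residual /R0 mulmxBl mul1mx !mulmxBr mul_mx_scalar !mulmxA.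
by apply/matrixP => i j; rewrite !mxE; lra.
Qed.

Lemma skew_residual : X^T *m B - (X^T *m B)^T = (X^T *m R0)^T - X^T *m R0.
Proof.
rewrite trX_residual !linearB /= hP tr_scalar_mx.
by apply/matrixP => i j; rewrite !mxE; lra.
Qed.

Hypothesis K_le_d : (K <= d)%N.
Let r := frob R0.
Let XtR0_bound : mx_bound (X^T *m R0) (d%:R * r).
Proof. exact: mx_bound_stiefel_trmul hX (lexx _) (frob_ge0 _) (mx_bound_frob _). Qed.

Lemma normal_residual_bound : mx_bound ((1%:M - X *m X^T) *m B) ((d%:R ^+ 2 + 1) * r).
Proof.
have dr := mulr_ge0 (ler0n _ d) (frob_ge0 R0).
have XXR := mx_bound_stiefel_mul hX (_ : K%:R <= d%:R) dr XtR0_bound.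
rewrite normal_residual; apply: mx_bound_le (mx_boundB (XXR _) (mx_bound_frob _)).
  by rewrite -/r expr2; lra.
by rewrite ler_nat.
Qed.

Lemma skew_residual_bound : mx_bound (X^T *m B - (X^T *m B)^T) ((d%:R ^+ 2 + 1) * r).
Proof.
rewrite skew_residual; apply: mx_bound_le (mx_boundB (mx_bound_tr XtR0_bound) XtR0_bound).
have := mulr_ge0 (sqr_ge0 (d%:R - 1 : R)) (frob_ge0 R0).
rewrite -/r; nra.
Qed.

End Residual.

Lemma Theta_sqr (R : realType) K (lam : 'I_K -> R) :
  (forall i, 0 <= lam i) -> Theta lam *m Theta lam = diag_mx (\row_i lam i).
Proof.
move=> lam_ge0; rewrite mulmx_diag; congr diag_mx.
by apply/rowP => i; rewrite !mxE -expr2 sqr_sqrtr.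
Qed.

Lemma absorb_quadratic (R : realFieldType) (y g Z : R) :
  0 <= y -> 0 <= g -> 0 <= Z -> Z * y <= 2^-1 ->
  y ^+ 2 <= Z * (g + y ^+ 2) * y -> y <= 2 * Z * g.
Proof.
move=> + g_ge0 Z_ge0; rewrite le_eqVlt => /orP [/eqP <- _ _|y_gt0 Zy].
  by rewrite !mulr_ge0.
rewrite expr2 ler_pM2r // => le_y.
have := ler_wpM2r (ltW y_gt0) Zy.
lra.
Qed.

Lemma decreasing_le_last (R : realDomainType) n (f : 'I_n.+1 -> R) :
  (forall i j : 'I_n.+1, (i < j)%N -> f j < f i) -> forall i, f ord_max <= f i.
Proof.
move=> f_decr i; have := leq_ord i; rewrite leq_eqVlt => /orP [/eqP i_max|lt_in].
  by rewrite (_ : i = ord_max) //; apply: ord_inj.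
exact/ltW/(f_decr i ord_max).
Qed.

Lemma decreasing_inj (R : realDomainType) n (f : 'I_n -> R) :
  (forall i j : 'I_n, (i < j)%N -> f j < f i) -> forall i j, i != j -> f i != f j.
Proof.
move=> f_decr i j; rewrite neq_ltn => /orP [/f_decr lt_ji|/f_decr lt_ij].
  by rewrite gt_eqF.
by rewrite lt_eqF.
Qed.

Lemma exists_small_pos (R : realFieldType) (u v w : R) : 0 <= u -> 0 <= v -> 0 < w ->
  exists delta, [/\ 0 < delta, delta <= 2^-1, u * delta <= 2^-1 & v * delta < w].
Proof.
move=> u_ge0 v_ge0 w_gt0; set t := v / w.
have t_ge0 : 0 <= t by rewrite divr_ge0 // ltW.
have s_gt0 : 0 < 2 * (1 + u + t) by lra.
exists (2 * (1 + u + t))^-1; set delta := _^-1.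
have delta_gt0 : 0 < delta by rewrite invr_gt0.
have : delta * (2 * (1 + u + t)) = 1 by rewrite mulVf // gt_eqF.
have := mulr_ge0 u_ge0 (ltW delta_gt0); have := mulr_ge0 t_ge0 (ltW delta_gt0).
move=> tdelta_ge0 udelta_ge0 sdelta; split => //; try lra.
have tdelta_lt1 : t * delta < 1 by lra.
by rewrite -(divfK (lt0r_neq0 w_gt0) v) -/t mulrAC gtr_pMl.
Qed.

Lemma exists_spectral_gauge (R : realType) d K (lam a : 'I_K -> R) :
  (forall i, 0 < lam i) -> (forall i, 0 < a i) ->
  (forall i j, i != j -> lam i != lam j) -> (forall i j, i != j -> a i != a j) ->
  exists M, spectral_gauge d lam a M.
Proof.
move=> lam_gt0 a_gt0 lam_inj a_inj.
pose F (ij : 'I_K * 'I_K) := lam ij.1 + a ij.1 + `|lam ij.1 - lam ij.2|^-1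
  + `|a ij.1 - a ij.2|^-1 + (lam ij.1 * a ij.1)^-1.
have F_terms ij : [/\ 0 < lam ij.1, 0 < a ij.1, 0 <= `|lam ij.1 - lam ij.2|^-1,
    0 <= `|a ij.1 - a ij.2|^-1 & 0 <= (lam ij.1 * a ij.1)^-1].
  by rewrite lam_gt0 a_gt0 !invr_ge0 !normr_ge0 mulr_ge0 // ltW.
have F_ge0 ij : 0 <= F ij by have [] := F_terms ij; rewrite /F; lra.
have sum_ge0 : 0 <= \sum_kl F kl by apply: sumr_ge0 => kl _.
pose M := 1 + d%:R + \sum_kl F kl.
have d_ge0 := ler0n R d.
have term_le ij : [/\ lam ij.1 <= M, a ij.1 <= M, `|lam ij.1 - lam ij.2|^-1 <= M,
    `|a ij.1 - a ij.2|^-1 <= M & (lam ij.1 * a ij.1)^-1 <= M].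
  have : F ij <= \sum_kl F kl by rewrite (bigD1 ij) //= lerDl sumr_ge0.
  have [] := F_terms ij; rewrite /M /F => *; split; lra.
have inv_le x : 0 < x -> x^-1 <= M -> 1 <= M * x.
  by move=> x_gt0 le_xM; rewrite -(mulVf (lt0r_neq0 x_gt0)) ler_wpM2r // ltW.
exists M; split=> [||i|i|i|i|i j ij|i j ij|i].
- by rewrite /M; lra.
- by rewrite /M; lra.
- exact: ltW.
- by have [] := term_le (i, i).
- exact: ltW.
- by have [] := term_le (i, i).
- by apply: inv_le; [rewrite normr_gt0 subr_eq0 lam_inj | have [] := term_le (i, j)].
- by apply: inv_le; [rewrite normr_gt0 subr_eq0 a_inj | have [] := term_le (i, j)].
- by apply: inv_le; [rewrite mulr_gt0 | have [] := term_le (i, i)].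
Qed.

Lemma dF_le_residual (R : realType) d K (Q X : 'M[R]_(d, K)) (P : 'M[R]_K)
    (lam a : 'I_K -> R) (M Z alpha : R) :
  Q^T *m Q = 1%:M -> (K <= d)%N -> spectral_gauge d lam a M ->
  (d * K)%:R * (9 * M ^+ 9) <= Z ->
  X^T *m X = 1%:M -> P^T = P -> dF X Q <= 1 -> Z * dF X Q <= 2^-1 ->
  dF X Q <= 2 * Z * (d%:R ^+ 2 + 1) * frob (X *m P - Aalpha Q lam a alpha X).
Proof.
move=> hQ hKd hM le_Z hX hP; have [q ->] := dF_attained X Q => y_le1 Zy.
rewrite /Aalpha Theta_sqr; last exact: gauge_lam_ge0 hM.
set y := frob (X - _) in y_le1 Zy *; set r := frob _.
have r_ge0 : 0 <= r by exact: frob_ge0.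
have g_ge0 : 0 <= (d%:R ^+ 2 + 1) * r by rewrite mulr_ge0 // addr_ge0 ?sqr_ge0.
have Yb := local_error_bound hQ hX hM hKd g_ge0
  (normal_residual_bound _ P alpha hX hKd) (skew_residual_bound _ alpha hX hP) y_le1.
have y_ge0 : 0 <= y by exact: frob_ge0.
have M_ge0 : 0 <= M := le_trans ler01 (gauge_ge1 hM).
have Z_ge0 : 0 <= Z by apply: le_trans le_Z; rewrite !mulr_ge0 ?exprn_ge0.
rewrite -mulrA; apply: absorb_quadratic => //.
apply: le_trans (sqr_frob_le_bound Yb) _; rewrite -/y mulrA.
by rewrite ler_wpM2r // ler_wpM2r // addr_ge0 ?sqr_ge0.
Qed.

(* Indices are shifted: [ord0] is the paper's 1 and [ord_max] its K = k.+1. *)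
Theorem theorem2 (R : realType) (d k : nat) (hdK : (k.+1 < d)%N)
    (Q : 'M[R]_(d, k.+1)) (hQ : stiefel Q)
    (lam a : 'I_k.+1 -> R)
    (hlam : forall i j : 'I_k.+1, (i < j)%N -> lam j < lam i)
    (hlamK : 0 < lam ord_max)
    (ha : forall i j : 'I_k.+1, (i < j)%N -> a j < a i)
    (haK : 0 < a ord_max) :
  exists delta : R,
    [/\ 0 < delta, delta < Num.sqrt 2 / 2,
        0 < lam ord_max * a ord_max - lam ord0 * a ord0 * delta &
        forall alpha : R, 0 <= alpha ->
          alpha < lam ord_max * a ord_max - lam ord0 * a ord0 * delta ->
          exists eta1 : R, 0 < eta1 /\
            forall X : 'M[R]_(d, k.+1), stiefel X -> dF X Q <= delta ->
              forall (U : 'M[R]_(d, k.+1)) (s : 'rV[R]_k.+1) (V : 'M[R]_k.+1),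
                thin_svd (Aalpha Q lam a alpha X) U s V ->
                dF X Q <= eta1 * residual X (Aalpha Q lam a alpha X) s V].
Proof.
have lam_gt0 i : 0 < lam i := lt_le_trans hlamK (decreasing_le_last hlam i).
have a_gt0 i : 0 < a i := lt_le_trans haK (decreasing_le_last ha i).
have [M hM] := exists_spectral_gauge d lam_gt0 a_gt0 (decreasing_inj hlam) (decreasing_inj ha).
pose Z := (d * k.+1)%:R * (9 * M ^+ 9).
have Z_ge0 : 0 <= Z by rewrite !mulr_ge0 ?exprn_ge0 // (le_trans ler01 (gauge_ge1 hM)).
have [delta [delta_gt0 delta_le Zdelta l1delta]] :=
  exists_small_pos Z_ge0 (ltW (mulr_gt0 (lam_gt0 ord0) (a_gt0 ord0)))
    (mulr_gt0 hlamK haK).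
have sqrt2_gt1 : 1 < Num.sqrt (2 : R) by rewrite -[X in X < _]sqrtr1 ltr_sqrt; lra.
exists delta; split => //; [lra | by rewrite subr_gt0 | move=> alpha _ _].
pose C := 2 * Z * (d%:R ^+ 2 + 1).
have C_ge0 : 0 <= C by rewrite /C; have := sqr_ge0 (d%:R : R); nra.
exists (C + 1); split => [|X hX dF_le U s V _]; first lra.
have sym_VsV : (V *m diag_mx s *m V^T)^T = V *m diag_mx s *m V^T.
  by rewrite !trmx_mul trmxK tr_diag_mx mulmxA.
apply: le_trans (dF_le_residual alpha hQ (ltnW hdK) hM (lexx Z) hX sym_VsV _ _) _.
- lra.
- by apply: le_trans Zdelta; rewrite ler_wpM2l.
- by rewrite /residual !mulmxA ler_wpM2r ?frob_ge0 ?lerDl.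
Qed.
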